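(* Let $K$ be an infinite compact Hausdorff space. Then $sbiort_1(C(K))=hL(K)$, and consequently $hL(K)\leq sbiort(C(K))$.
   Context: For a Banach space $X$ and an ordinal $\alpha$, a transfinite sequence $(x_i,x_i^* )_{i<\alpha}\subseteq X\times X^*$ is semibiorthogonal if $x_i^*(x_i)=1$ for all $i$, $x_i^*(x_j)=0$ for $j<i<\alpha$, and $x_i^*(x_j)\geq0$ for $i<j<\alpha$. $sbiort(X)$ is the supremum of $|\alpha|$ over semibiorthogonal sequences of length $\alpha$. For $C(K)$ (continuous real functions, sup norm, dual = Radon measures), a measure is $1$-supported if it equals $a\delta_x$ for some $a\in\mathbb R$, $x\in K$; $sbiort_1(C(K))$ is the supremum of $|\alpha|$ over semibiorthogonal sequences $(f_i,\mu_i)_{i<\alpha}$ in $C(K)$ with every $\mu_i$ $1$-supported. $hL(K)=\sup\{L(Y):Y\subseteq K\}$, $L(Y)$ the least $\kappa$ such that every open cover of $Y$ has a subcover of size at most $\kappa$. *)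

From Stdlib Require Import Reals List.
Open Scope R_scope.

Section Defs.
Context {T : Type}.

Definition is_topology (opn : (T -> Prop) -> Prop) : Prop :=
  opn (fun _ => True) /\ opn (fun _ => False) /\
  (forall A B, opn A -> opn B -> opn (fun x => A x /\ B x)) /\
  (forall F : (T -> Prop) -> Prop, (forall A, F A -> opn A) ->
     opn (fun x => exists A, F A /\ A x)).

Definition top_compact (opn : (T -> Prop) -> Prop) : Prop :=
  forall U : (T -> Prop) -> Prop, (forall A, U A -> opn A) ->
    (forall x, exists A, U A /\ A x) ->
    exists l : list (T -> Prop), Forall U l /\ (forall x, exists A, In A l /\ A x).

Definition top_hausdorff (opn : (T -> Prop) -> Prop) : Prop :=
  forall x y : T, x <> y -> exists A B, opn A /\ opn B /\ A x /\ B y /\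
    (forall z, A z -> B z -> False).

Definition infinite_type : Prop := ~ exists l : list T, forall x, In x l.

Definition continuous_on (opn : (T -> Prop) -> Prop) (f : T -> R) : Prop :=
  forall a b : R, opn (fun x => a < f x < b).

Definition card_le (A C : Type) : Prop := exists g : A -> C, forall a b, g a = g b -> a = b.

(* A strict well-order on I (so (I, lt) is order-isomorphic to an ordinal). *)
Definition well_order {I : Type} (lt : I -> I -> Prop) : Prop :=
  (forall i, ~ lt i i) /\ (forall i j k, lt i j -> lt j k -> lt i k) /\
  (forall i j, lt i j \/ i = j \/ lt j i) /\ well_founded lt.

(* Elements of C(K)^*: linear functionals on C(K) bounded for the sup norm. *)
Definition in_dual (opn : (T -> Prop) -> Prop) (phi : (T -> R) -> R) : Prop :=
  (forall f g a b, continuous_on opn f -> continuous_on opn g ->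
     phi (fun x => a * f x + b * g x) = a * phi f + b * phi g) /\
  exists M : R, forall f c, continuous_on opn f -> (forall x, Rabs (f x) <= c) ->
     Rabs (phi f) <= M * c.

Definition one_supported (opn : (T -> Prop) -> Prop) (phi : (T -> R) -> R) : Prop :=
  exists (a : R) (x : T), forall f, continuous_on opn f -> phi f = a * f x.

Definition semibiorthogonal {I : Type} (lt : I -> I -> Prop)
  (f : I -> T -> R) (phi : I -> (T -> R) -> R) : Prop :=
  (forall i, phi i (f i) = 1) /\
  (forall i j, lt j i -> phi i (f j) = 0) /\
  (forall i j, lt i j -> 0 <= phi i (f j)).

Definition sbiort_le (opn : (T -> Prop) -> Prop) (C : Type) : Prop :=
  forall (I : Type) (lt : I -> I -> Prop) (f : I -> T -> R) (phi : I -> (T -> R) -> R),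
    well_order lt -> (forall i, continuous_on opn (f i)) ->
    (forall i, in_dual opn (phi i)) -> semibiorthogonal lt f phi -> card_le I C.

Definition sbiort1_le (opn : (T -> Prop) -> Prop) (C : Type) : Prop :=
  forall (I : Type) (lt : I -> I -> Prop) (f : I -> T -> R) (phi : I -> (T -> R) -> R),
    well_order lt -> (forall i, continuous_on opn (f i)) ->
    (forall i, in_dual opn (phi i)) -> (forall i, one_supported opn (phi i)) ->
    semibiorthogonal lt f phi -> card_le I C.

Definition lindelof_le (opn : (T -> Prop) -> Prop) (Y : T -> Prop) (C : Type) : Prop :=
  forall U : (T -> Prop) -> Prop, (forall A, U A -> opn A) ->
    (forall x, Y x -> exists A, U A /\ A x) ->
    exists V : (T -> Prop) -> Prop, (forall A, V A -> U A) /\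
      (forall x, Y x -> exists A, V A /\ A x) /\ card_le {A : T -> Prop | V A} C.

Definition hL_le (opn : (T -> Prop) -> Prop) (C : Type) : Prop :=
  forall Y : T -> Prop, lindelof_le opn Y C.

End Defs.

(* If (f_i, a_i delta_{x_i}) is
   semibiorthogonal, then f_i(x_j) = 0 for i < j while f_i(x_i) <> 0, so the
   points x_i are right-separated by the open cozero sets of the f_i.  A
   right-separated family has at most hL(K) points; the counting argument
   uses |C * C| = |C| for infinite C (Hessenberg's theorem, proved here with
   Goedel's ordering of pairs) and the fact that hL(K) is infinite.

   Given an open cover of Y ⊆ K,
   well-order K and greedily select the points of Y not covered by the chosen
   neighbourhoods of earlier selected points.  Urysohn functions of these
   neighbourhoods together with the point evaluations at the selected points
   form a semibiorthogonal sequence, so at most |C| points are selected, and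
   their neighbourhoods form a subcover. *)

From Pilot Require Import Defs.
From Stdlib Require Import Reals List Lra Lia Classical ClassicalEpsilon
  FunctionalExtensionality PropExtensionality ProofIrrelevance Wellfounded FinFun.

Module WellOrdering.
From mathcomp Require Import all_boot all_classical wochoice.

Lemma well_order_exists (A : Type) : exists lt : A -> A -> Prop, Defs.well_order lt.
Proof.
pose T' := {classic A}.
have [R HR] := well_ordering_principle T'.
have minP : forall P : T' -> Prop, (exists x, P x) ->
    exists z, P z /\ (forall x, P x -> R z x) /\
      (forall z', P z' -> (forall x, P x -> R z' x) -> z' = z).
  move=> P [x Px].
  have ne : wochoice.nonempty [pred y | `[< P y >]] by exists x; rewrite inE.
  have [z [[zP zmin] zu]] := HR _ ne.
  exists z; split; first by move: zP; rewrite inE.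
  split; first by move=> y Py; apply: zmin; rewrite inE.
  move=> z' Pz' mz'; symmetry; apply: zu; split; first by rewrite inE.
  by move=> y; rewrite inE; apply: mz'.
have refl : forall x : T', R x x.
  move=> x; have [z [zx [zm _]]] := minP (fun y => y = x) (ex_intro _ x erefl).
  by rewrite -zx; apply: zm.
have tot : forall x y : T', R x y \/ R y x.
  move=> x y; have [z [[]-> [zm _]]] :=
    minP (fun w => w = x \/ w = y) (ex_intro _ x (or_introl erefl)).
    by left; apply: zm; right.
  by right; apply: zm; left.
have anti : forall x y : T', R x y -> R y x -> x = y.
  move=> x y Rxy Ryx.
  have [z [_ [_ zu]]] := minP (fun w => w = x \/ w = y) (ex_intro _ x (or_introl erefl)).
  rewrite (zu x (or_introl erefl)); last by move=> w [] ->.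
  rewrite (zu y (or_intror erefl)) //; by move=> w [] ->.
have trR : forall x y z : T', R x y -> R y z -> R x z.
  move=> x y z Rxy Ryz.
  have [m [mP [mm _]]] :=
    minP (fun w => w = x \/ w = y \/ w = z) (ex_intro _ x (or_introl erefl)).
  case: mP => [mx|[my|mz]]; subst m.
  - by apply: mm; right; right.
  - by rewrite (anti _ _ Rxy (mm x (or_introl erefl))).
  - have E := anti _ _ Ryz (mm y (or_intror (or_introl erefl))); subst z.
    by rewrite (anti _ _ Rxy (mm x (or_introl erefl))).
exists (fun x y : A => R x y /\ x <> y); split; [|split; [|split]].
- by move=> a [_].
- move=> a b c [Rab nab] [Rbc nbc]; split; first exact: trR Rab Rbc.
  by move=> ac; subst c; apply: nab; exact: anti.
- move=> a b; case: (Classical_Prop.classic (a = b)) => [->|nab]; first by right; left.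
  by have [H|H] := tot a b; [left|right; right]; split => // E; apply: nab.
- move=> a; apply: NNPP => Na.
  have [z [Nz [zm _]]] :=
    minP (fun z => ~ Acc (fun x y : A => R x y /\ x <> y) z) (ex_intro _ a Na).
  apply: Nz; constructor => y [Ryz nyz]; apply: NNPP => Ny.
  by apply: nyz; apply: anti => //; apply: zm.
Qed.

End WellOrdering.

Local Open Scope nat_scope.

Notation cid H := (constructive_indefinite_description _ H).
Notation emi := excluded_middle_informative.

Lemma sig_ext {A : Type} {P : A -> Prop} (a b : {x | P x}) :
  proj1_sig a = proj1_sig b -> a = b.
Proof.
  destruct a as [a Ha], b as [b Hb]; simpl; intros ->.
  f_equal; apply proof_irrelevance.
Qed.

Lemma card_le_refl (A : Type) : card_le A A.
Proof. exists (fun a => a); auto. Qed.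

Lemma card_le_trans (A B C : Type) : card_le A B -> card_le B C -> card_le A C.
Proof. intros [f Hf] [g Hg]; exists (fun a => g (f a)); auto. Qed.

Lemma card_le_prod (A B A' B' : Type) :
  card_le A B -> card_le A' B' -> card_le (A * A') (B * B').
Proof.
  intros [f Hf] [g Hg]; exists (fun p => (f (fst p), g (snd p))).
  intros [a a'] [b b'] E; injection E; intros; f_equal; auto.
Qed.

Lemma card_le_sub (A : Type) (P Q : A -> Prop) :
  (forall a, P a -> Q a) -> card_le {a | P a} {a | Q a}.
Proof.
  intros H; exists (fun a => exist _ (proj1_sig a) (H _ (proj2_sig a))).
  intros a b E; apply sig_ext; exact (f_equal (@proj1_sig _ _) E).
Qed.

Lemma card_le_full (A : Type) : card_le A {a : A | True}.
Proof. exists (fun a => exist _ a I); intros a b E; injection E; auto. Qed.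

Lemma card_full_le (A : Type) : card_le {a : A | True} A.
Proof. exists (@proj1_sig _ _); intros a b E; apply sig_ext; auto. Qed.

Lemma card_le_range (A B : Type) (g : A -> B) : card_le {b | exists a, b = g a} A.
Proof.
  exists (fun b : {b | exists a, b = g a} => proj1_sig (cid (proj2_sig b))).
  intros b1 b2 E; apply sig_ext.
  rewrite (proj2_sig (cid (proj2_sig b1))), (proj2_sig (cid (proj2_sig b2))), E.
  reflexivity.
Qed.

Lemma card_le_option (A : Type) : card_le nat A -> card_le (option A) A.
Proof.
  intros [e He].
  (* shift the copy of [nat] inside [A] by one, freeing [e 0] for [None] *)
  set (index := fun x (H : exists n, x = e n) => proj1_sig (cid H)).
  assert (Hindex : forall x H, x = e (index x H)) by (intros x H; exact (proj2_sig (cid H))).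
  exists (fun o => match o with
    | None => e 0
    | Some x => match emi (exists n, x = e n) with
                | left H => e (S (index x H))
                | right _ => x end end).
  intros [x|] [y|]; simpl.
  - destruct (emi (exists n, x = e n)) as [Hx|Hx], (emi (exists n, y = e n)) as [Hy|Hy];
      intros E.
    + apply He in E; injection E as E.
      rewrite (Hindex x Hx), (Hindex y Hy), E; reflexivity.
    + exfalso; apply Hy; exists (S (index x Hx)); exact (eq_sym E).
    + exfalso; apply Hx; exists (S (index y Hy)); exact E.
    + rewrite E; reflexivity.
  - destruct (emi (exists n, x = e n)) as [Hx|Hx]; intros E.
    + apply He in E; discriminate.
    + exfalso; apply Hx; exists 0; exact E.
  - destruct (emi (exists n, y = e n)) as [Hy|Hy]; intros E.
    + apply He in E; discriminate.
    + exfalso; apply Hy; exists 0; exact (eq_sym E).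
  - reflexivity.
Qed.

Definition finite {W : Type} (P : W -> Prop) := exists l : list W, forall w, P w -> In w l.
Definition infinite {W : Type} (P : W -> Prop) := card_le nat {w | P w}.

Lemma infinite_or_finite {W : Type} (P : W -> Prop) : infinite P \/ finite P.
Proof.
  destruct (classic (finite P)) as [H|H]; [right; exact H| left].
  assert (Hnew : forall l : list W, exists w, P w /\ ~ In w l).
  { intros l; apply NNPP; intros Hc; apply H; exists l; intros w Pw.
    apply NNPP; intros Hw; apply Hc; eauto. }
  destruct (Hnew nil) as [w0 _].
  set (next := fun l : list W => epsilon (inhabits w0) (fun w => P w /\ ~ In w l)).
  assert (Hnext : forall l, P (next l) /\ ~ In (next l) l).
  { intros l; apply epsilon_spec, Hnew. }
  set (L := fix L n := match n with 0 => nil | S n => next (L n) :: L n end).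
  assert (Hmono : forall n m, n < m -> In (next (L n)) (L m)).
  { intros n m Hnm; induction Hnm; simpl; auto. }
  exists (fun n => exist _ (next (L n)) (proj1 (Hnext (L n)))).
  intros a b E; apply (f_equal (@proj1_sig _ _)) in E; simpl in E.
  destruct (Nat.lt_trichotomy a b) as [h|[h|h]]; auto; exfalso.
  - apply (proj2 (Hnext (L b))); rewrite <- E; apply Hmono; auto.
  - apply (proj2 (Hnext (L a))); rewrite E; apply Hmono; auto.
Qed.

Lemma infinite_not_finite {W : Type} (P : W -> Prop) : infinite P -> ~ finite P.
Proof.
  intros [h Hh] [l Hl].
  assert (Hinj : FinFun.Injective (fun m => proj1_sig (h m))).
  { intros a b E; apply Hh, sig_ext, E. }
  assert (Hincl : incl (map (fun m => proj1_sig (h m)) (seq 0 (S (length l)))) l).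
  { intros w Hw; apply in_map_iff in Hw; destruct Hw as [m [<- _]].
    apply Hl, proj2_sig. }
  pose proof (NoDup_incl_length (Injective_map_NoDup Hinj (seq_NoDup _ 0)) Hincl) as Hlen.
  rewrite length_map, length_seq in Hlen; lia.
Qed.

Lemma wf_min {A : Type} (r : A -> A -> Prop) : well_founded r ->
  forall P : A -> Prop, (exists x, P x) -> exists x, P x /\ forall y, r y x -> ~ P y.
Proof.
  intros wf P [x Px]. induction (wf x) as [x _ IH].
  destruct (classic (exists y, r y x /\ P y)) as [[y [ry Py]]|N].
  - exact (IH y ry Py).
  - exists x; split; auto. intros y ry Py; apply N; eauto.
Qed.

Section Hessenberg.
Variables (W : Type) (lt : W -> W -> Prop).
Hypothesis lt_wo : well_order lt.

Let lt_trans : forall a b c, lt a b -> lt b c -> lt a c. Proof. apply lt_wo. Qed.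
Let lt_total : forall a b, lt a b \/ a = b \/ lt b a. Proof. apply lt_wo. Qed.
Let lt_wf : well_founded lt. Proof. apply lt_wo. Qed.

Definition wle a b := lt a b \/ a = b.

Lemma wle_trans a b c : wle a b -> wle b c -> wle a c.
Proof. unfold wle; intros [h|<-] [h'|<-]; auto. left; exact (lt_trans _ _ _ h h'). Qed.

(* Initial segments: [Seg (Some v)] is the set of elements below [v] and
   [Seg None] is all of [W]; bounds are ordered by [blt], with [None] on top. *)
Definition Seg (t : option W) (w : W) : Prop :=
  match t with Some v => lt w v | None => True end.
Definition blt (s t : option W) : Prop :=
  match s with Some a => Seg t a | None => False end.
Definition ble s t := blt s t \/ s = t.

Lemma blt_wf : well_founded blt.
Proof.
  assert (HS : forall a, Acc blt (Some a)).
  { intros a; induction (lt_wf a) as [a _ IH]; constructor; intros [b|] H; simpl in H.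
    - exact (IH b H).
    - contradiction. }
  intros [a|]; auto. constructor; intros [b|] H; auto; contradiction.
Qed.

Lemma blt_ble_trans s t u : blt s t -> ble t u -> blt s u.
Proof.
  intros H [H'|<-]; auto.
  destruct s as [a|], t as [b|], u as [c|]; simpl in *; eauto; contradiction.
Qed.

Lemma Seg_ble t u w : Seg t w -> ble t u -> Seg u w.
Proof. exact (blt_ble_trans (Some w) t u). Qed.

Definition wmax a b := if emi (lt a b) then b else a.

Lemma wle_wmax_l a b : wle a (wmax a b).
Proof. unfold wmax; destruct (emi (lt a b)); [left|right]; auto. Qed.

Lemma wle_wmax_r a b : wle b (wmax a b).
Proof.
  unfold wmax; destruct (emi (lt a b)); [right; auto|].
  destruct (lt_total a b) as [h|[h|h]]; [contradiction| right; auto | left; auto].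
Qed.

Lemma wmax_cases a b : wmax a b = a \/ wmax a b = b.
Proof. unfold wmax; destruct (emi (lt a b)); auto. Qed.

(* The Goedel ordering of pairs: first by maximum, then lexicographically.
   It is a well-order in which the predecessors of a pair [p] all lie in
   the square of the closed segment below [wmax p]. *)
Definition lex3 (x y : W * (W * W)) : Prop :=
  lt (fst x) (fst y) \/ (fst x = fst y /\ (lt (fst (snd x)) (fst (snd y)) \/
     (fst (snd x) = fst (snd y) /\ lt (snd (snd x)) (snd (snd y))))).

Lemma lex3_wf : well_founded lex3.
Proof.
  intros [m [a b]]. revert a b.
  induction (lt_wf m) as [m _ IHm]. intros a.
  induction (lt_wf a) as [a _ IHa]. intros b.
  induction (lt_wf b) as [b _ IHb].
  constructor. intros [m' [a' b']] H. unfold lex3 in H; simpl in H.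
  destruct H as [H|[-> [H|[-> H]]]]; auto.
Qed.

Definition godel_lt (p q : W * W) :=
  lex3 (wmax (fst p) (snd p), p) (wmax (fst q) (snd q), q).

Lemma godel_lt_wf : well_founded godel_lt.
Proof. exact (wf_inverse_image _ _ lex3 (fun p => (wmax (fst p) (snd p), p)) lex3_wf). Qed.

Lemma godel_lt_total p q : godel_lt p q \/ p = q \/ godel_lt q p.
Proof.
  destruct p as [a b], q as [c d]; unfold godel_lt, lex3; simpl.
  destruct (lt_total (wmax a b) (wmax c d)) as [h|[h|h]]; [left; left; exact h| |].
  2: right; right; left; exact h.
  destruct (lt_total a c) as [h1|[<-|h1]]; [left; right; auto| |right; right; right; auto].
  destruct (lt_total b d) as [h2|[<-|h2]]; [left; right; auto| auto| right; right; right; auto].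
Qed.

Definition box (m : W) (p : W * W) := wle (fst p) m /\ wle (snd p) m.

Lemma godel_lt_box q p : godel_lt q p -> box (wmax (fst p) (snd p)) q.
Proof.
  intros H.
  assert (Hm : wle (wmax (fst q) (snd q)) (wmax (fst p) (snd p))).
  { destruct H as [h|[h _]]; [left|right]; exact h. }
  split; [exact (wle_trans _ _ _ (wle_wmax_l _ _) Hm)| exact (wle_trans _ _ _ (wle_wmax_r _ _) Hm)].
Qed.

(* If [Seg v] is strictly larger than every square
   [box m] with [m] in [Seg v], then listing the pairs of [Seg v] along the
   Goedel ordering and sending each to a fresh element of [Seg v] is possible
   at every stage, and gives an injection of the square into [Seg v]. *)
Section GodelInjection.
Variables (v : option W) (w0 : W).
Hypothesis small_boxes :
  forall m, Seg v m -> ~ card_le {w | Seg v w} {p | box m p}.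

Let in_square (p : W * W) := Seg v (fst p) /\ Seg v (snd p).

(* The code of [p] is a point of [Seg v] distinct from the codes of all
   predecessors of [p] in the square ([w0] is only a default value). *)
Definition godel_code : W * W -> W :=
  Fix godel_lt_wf (fun _ => W) (fun p rec =>
    epsilon (inhabits w0) (fun y => Seg v y /\
      forall q (H : godel_lt q p), in_square q -> rec q H <> y)).

Lemma godel_code_eq p : godel_code p = epsilon (inhabits w0)
  (fun y => Seg v y /\ forall q, godel_lt q p -> in_square q -> godel_code q <> y).
Proof.
  unfold godel_code; rewrite Fix_eq; [reflexivity|].
  intros x f g Hfg; f_equal; apply functional_extensionality; intros y.
  apply propositional_extensionality; split; intros [Hy Hq]; split; auto;
    intros q H Yq; [rewrite <- Hfg | rewrite Hfg]; auto.
Qed.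

(* A fresh code always exists, since the predecessors of [p] live in a
   box that is too small to exhaust [Seg v]. *)
Lemma godel_code_fresh p : in_square p ->
  Seg v (godel_code p) /\
  forall q, godel_lt q p -> in_square q -> godel_code q <> godel_code p.
Proof.
  intros Hp. rewrite godel_code_eq; apply epsilon_spec.
  apply NNPP; intros Nfresh.
  set (m := wmax (fst p) (snd p)).
  assert (Hm : Seg v m).
  { destruct (wmax_cases (fst p) (snd p)) as [E|E]; unfold m; rewrite E; apply Hp. }
  apply (small_boxes m Hm).
  (* otherwise every element of [Seg v] is the code of a predecessor of [p] *)
  assert (Hpre : forall y : {w | Seg v w}, exists q : {q | box m q},
             godel_code (proj1_sig q) = proj1_sig y).
  { intros [y Hy]; simpl. apply NNPP; intros N; apply Nfresh; exists y; split; auto.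
    intros q Hq Sq E; apply N; exists (exist _ q (godel_lt_box q p Hq)); exact E. }
  exists (fun y => proj1_sig (cid (Hpre y))).
  intros y1 y2 E; apply sig_ext.
  rewrite <- (proj2_sig (cid (Hpre y1))), <- (proj2_sig (cid (Hpre y2))), E.
  reflexivity.
Qed.

Lemma godel_injection : card_le ({w | Seg v w} * {w | Seg v w}) {w | Seg v w}.
Proof.
  exists (fun pr => exist _ (godel_code (proj1_sig (fst pr), proj1_sig (snd pr)))
       (proj1 (godel_code_fresh _ (conj (proj2_sig (fst pr)) (proj2_sig (snd pr)))))).
  intros [[a Ha] [b Hb]] [[c Hc] [d Hd]] E.
  apply (f_equal (@proj1_sig _ _)) in E; simpl in E.
  destruct (godel_lt_total (a, b) (c, d)) as [G|[G|G]].
  - exfalso; exact (proj2 (godel_code_fresh (c, d) (conj Hc Hd)) _ G (conj Ha Hb) E).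
  - injection G; intros; subst; f_equal; apply sig_ext; auto.
  - exfalso; exact (proj2 (godel_code_fresh (a, b) (conj Ha Hb)) _ G (conj Hc Hd) (eq_sym E)).
Qed.

End GodelInjection.

Lemma closed_seg_le_option m :
  card_le {w | wle w m} (option {w | Seg (Some m) w}).
Proof.
  exists (fun w => match emi (lt (proj1_sig w) m) with
            | left H => Some (exist (Seg (Some m)) (proj1_sig w) H)
            | right _ => None end).
  intros [a Ha] [b Hb]; simpl.
  destruct (emi (lt a m)) as [h1|h1], (emi (lt b m)) as [h2|h2]; intros E;
    try discriminate.
  - injection E; intros; apply sig_ext; auto.
  - apply sig_ext; simpl.
    destruct Ha as [Ha|Ha]; [contradiction|]; destruct Hb as [Hb|Hb]; [contradiction|].
    congruence.
Qed.

Lemma box_le_square m : card_le {p | box m p} ({w | wle w m} * {w | wle w m}).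
Proof.
  exists (fun p => (exist _ (fst (proj1_sig p)) (proj1 (proj2_sig p)),
                    exist _ (snd (proj1_sig p)) (proj2 (proj2_sig p)))).
  intros [[a b] Hab] [[c d] Hcd] E; simpl in E.
  injection E; intros; apply sig_ext; simpl; congruence.
Qed.

Lemma small_boxes_below (v : option W) :
  (forall u, blt u v -> infinite (Seg u) ->
     card_le ({w | Seg u w} * {w | Seg u w}) {w | Seg u w}) ->
  infinite (Seg v) ->
  (forall u, blt u v -> ~ card_le {w | Seg v w} {w | Seg u w}) ->
  forall m, Seg v m -> ~ card_le {w | Seg v w} {p | box m p}.
Proof.
  intros IH Vinf Vinit m Hm Hbox.
  destruct (infinite_or_finite (Seg (Some m))) as [Minf|[l Hl]].
  - apply (Vinit (Some m) Hm).
    pose proof (card_le_option _ Minf) as Hopt.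
    apply (card_le_trans _ _ _ Hbox), (card_le_trans _ _ _ (box_le_square m)).
    apply (card_le_trans _ _ _ (card_le_prod _ _ _ _ (closed_seg_le_option m)
                                                     (closed_seg_le_option m))).
    apply (card_le_trans _ _ _ (card_le_prod _ _ _ _ Hopt Hopt)).
    exact (IH (Some m) Hm Minf).
  - (* a finite segment gives a finite box, which cannot contain [Seg v] *)
    apply (infinite_not_finite (box m) (card_le_trans _ _ _ Vinf Hbox)).
    exists (list_prod (m :: l) (m :: l)). intros [a b] [Ha Hb]; simpl in Ha, Hb.
    apply in_prod_iff; split.
    + destruct Ha as [Ha|<-]; [right; exact (Hl _ Ha)| left; auto].
    + destruct Hb as [Hb|<-]; [right; exact (Hl _ Hb)| left; auto].
Qed.

(* Hessenberg's theorem for initial segments, by induction on the bound: an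
   infinite segment is equinumerous to a minimal (cardinal) segment [Seg v],
   whose square embeds in it by Goedel's injection. *)
Lemma hessenberg_seg t : infinite (Seg t) ->
  card_le ({w | Seg t w} * {w | Seg t w}) {w | Seg t w}.
Proof.
  induction (blt_wf t) as [t _ IH]. intros Tinf.
  destruct (wf_min blt blt_wf (fun v => ble v t /\ card_le {w | Seg t w} {w | Seg v w}))
    as [v [[vt TV] vmin]].
  { exists t; split; [right; auto| apply card_le_refl]. }
  assert (VT : card_le {w | Seg v w} {w | Seg t w}).
  { apply card_le_sub; intros w H; exact (Seg_ble v t w H vt). }
  assert (Vinf : infinite (Seg v)) by exact (card_le_trans _ _ _ Tinf TV).
  assert (Vinit : forall u, blt u v -> ~ card_le {w | Seg v w} {w | Seg u w}).
  { intros u Hu VU. apply (vmin u Hu); split.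
    - left; exact (blt_ble_trans u v t Hu vt).
    - exact (card_le_trans _ _ _ TV VU). }
  assert (IHv : forall u, blt u v -> infinite (Seg u) ->
     card_le ({w | Seg u w} * {w | Seg u w}) {w | Seg u w}).
  { intros u Hu; apply IH; exact (blt_ble_trans u v t Hu vt). }
  pose proof Vinf as [e _].
  apply (card_le_trans _ _ _ (card_le_prod _ _ _ _ TV TV)), (card_le_trans _ _ _ (
    godel_injection v (proj1_sig (e 0)) (small_boxes_below v IHv Vinf Vinit))), VT.
Qed.

Theorem hessenberg : card_le nat W -> card_le (W * W) W.
Proof.
  intros Hn.
  assert (Winf : infinite (Seg None)) by exact (card_le_trans _ _ _ Hn (card_le_full W)).
  apply (card_le_trans _ _ _ (card_le_prod _ _ _ _ (card_le_full W) (card_le_full W))).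
  exact (card_le_trans _ _ _ (hessenberg_seg None Winf) (card_full_le W)).
Qed.

End Hessenberg.

Lemma card_square (C : Type) : card_le nat C -> card_le (C * C) C.
Proof.
  intros Hn; destruct (WellOrdering.well_order_exists C) as [lt Hwo].
  exact (hessenberg C lt Hwo Hn).
Qed.

Lemma card_prod_option (C : Type) : card_le nat C -> card_le (C * option C) C.
Proof.
  intros Hn.
  apply (card_le_trans _ (C * C)); [|exact (card_square C Hn)].
  exact (card_le_prod _ _ _ _ (card_le_refl C) (card_le_option C Hn)).
Qed.

(* A union of [V]-many initial segments, each of size at most [|C|], has size
   at most [|V * option C|]: a point [j] below the bound [k a] is coded by
   [a] and its image in [C], the bound itself by [a] alone. *)
Lemma card_le_union_of_segments (I V C : Type) (lt : I -> I -> Prop)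
  (S : I -> Prop) (k : V -> I) :
  (forall i, S i -> card_le {j | lt j i} C) -> (forall a, S (k a)) ->
  (forall j, S j -> exists a, lt j (k a) \/ j = k a) ->
  card_le {j | S j} (V * option C).
Proof.
  intros Hseg Hk Hcov.
  assert (Hemb : forall a, card_le {j | lt j (k a)} C) by (intros a; exact (Hseg _ (Hk a))).
  set (e := fun a => proj1_sig (cid (Hemb a))).
  assert (He : forall a x y, e a x = e a y -> x = y) by (intros a; exact (proj2_sig (cid (Hemb a)))).
  assert (Ha : forall j : {j | S j}, exists a, lt (proj1_sig j) (k a) \/ proj1_sig j = k a).
  { intros [j Sj]; exact (Hcov j Sj). }
  set (a := fun j => proj1_sig (cid (Ha j))).
  assert (Hak : forall j, lt (proj1_sig j) (k (a j)) \/ proj1_sig j = k (a j)).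
  { intros j; exact (proj2_sig (cid (Ha j))). }
  exists (fun j => (a j, match emi (lt (proj1_sig j) (k (a j))) with
                        | left H => Some (e (a j) (exist _ _ H))
                        | right _ => None end)).
  intros j1 j2 E; injection E as Ea Eo; apply sig_ext.
  destruct (emi (lt (proj1_sig j1) (k (a j1)))) as [h1|h1],
           (emi (lt (proj1_sig j2) (k (a j2)))) as [h2|h2]; try discriminate.
  - revert h1 h2 Eo; rewrite Ea; intros h1 h2 Eo; injection Eo as Eo.
    exact (f_equal (@proj1_sig _ _) (He _ _ _ Eo)).
  - destruct (Hak j1), (Hak j2); try contradiction; congruence.
Qed.

(* If |I| exceeds |C|, some subset [S] of [I] exceeds |C| while every element
   of [S] has at most |C| predecessors (take the segment below the least
   element with more than |C| predecessors, or all of [I]). *)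
Lemma big_set_with_small_segments (I C : Type) (lt : I -> I -> Prop) :
  well_founded lt -> ~ card_le I C ->
  exists S : I -> Prop, ~ card_le {k | S k} C /\ forall j, S j -> card_le {k | lt k j} C.
Proof.
  intros wf NI.
  destruct (classic (exists i, ~ card_le {k | lt k i} C)) as [Hbig|Hsmall].
  - destruct (wf_min lt wf _ Hbig) as [i0 [Hi0 Hmin]].
    exists (fun k => lt k i0); split; auto.
    intros j Hj; apply NNPP; exact (Hmin j Hj).
  - exists (fun _ => True); split.
    + intros Hc; exact (NI (card_le_trans _ _ _ (card_le_full I) Hc)).
    + intros j _; apply NNPP; intros Hc; apply Hsmall; eauto.
Qed.

Lemma right_separated_card_le (T I C : Type) (opn : (T -> Prop) -> Prop)
  (lt : I -> I -> Prop) (x : I -> T) (U : I -> T -> Prop) :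
  well_order lt -> (forall i, opn (U i)) -> (forall i, U i (x i)) ->
  (forall i j, lt i j -> ~ U i (x j)) ->
  hL_le opn C -> card_le nat C -> card_le I C.
Proof.
  intros [_ [_ [lt_total lt_wf]]] Uo xU sep hL Cinf.
  apply NNPP; intros NI.
  destruct (big_set_with_small_segments I C lt lt_wf NI) as [S [NS Hseg]].
  destruct (hL (fun z => exists k, S k /\ z = x k) (fun A => exists k, S k /\ A = U k))
    as [V [VU [Vcov HV]]].
  { intros A [k [_ ->]]; apply Uo. }
  { intros z [k [Sk ->]]; exists (U k); split; eauto. }
  assert (Hk : forall A : {A | V A}, exists k, S k /\ proj1_sig A = U k).
  { intros [A HA]; exact (VU A HA). }
  set (k := fun A => proj1_sig (cid (Hk A))).
  assert (Hkspec : forall A, S (k A) /\ proj1_sig A = U (k A)).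
  { intros A; exact (proj2_sig (cid (Hk A))). }
  (* a point [x j] covered by [U (k A)] has [j <= k A], by right separation *)
  assert (Hcov : forall j, S j -> exists A, lt j (k A) \/ j = k A).
  { intros j Sj. destruct (Vcov (x j)) as [A [VA Axj]]; [eauto|].
    exists (exist _ A VA).
    destruct (lt_total j (k (exist _ A VA))) as [h|[h|h]]; auto.
    exfalso; apply (sep _ _ h). rewrite <- (proj2 (Hkspec _)); exact Axj. }
  apply NS, (card_le_trans _ ({A | V A} * option C)).
  - exact (card_le_union_of_segments _ _ _ lt S k Hseg (fun A => proj1 (Hkspec A)) Hcov).
  - apply (card_le_trans _ _ _ (card_le_prod _ _ _ _ HV (card_le_refl _))).
    exact (card_prod_option C Cinf).
Qed.

Lemma separate_from_list (T : Type) (opn : (T -> Prop) -> Prop) :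
  is_topology opn -> top_hausdorff opn ->
  forall (l : list T) (x : T), exists O, opn O /\ O x /\ forall y, In y l -> y <> x -> ~ O y.
Proof.
  intros [Htrue [_ [Hinter _]]] Hh l x. induction l as [|a l [O [Oo [Ox HO]]]].
  - exists (fun _ => True); split; [exact Htrue| split; [exact I| intros y []]].
  - destruct (classic (a = x)) as [<-|nax].
    + exists O; split; auto; split; auto. intros y [<-|Hy] Hne; [congruence|auto].
    + destruct (Hh x a (fun E => nax (eq_sym E))) as [A [B [Ao [Bo [Ax [Ba AB]]]]]].
      exists (fun z => O z /\ A z); split; [apply Hinter; auto|]. split; [auto|].
      intros y [<-|Hy] Hne [Oy Ay].
      * exact (AB _ Ay Ba).
      * exact (HO y Hy Hne Oy).
Qed.

(* In a Hausdorff space, hL(K) <= |C| bounds the size of every finite set: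
   the separating open sets cover it, and distinct points need distinct
   members of any subcover. *)
Lemma hL_le_list (T C : Type) (opn : (T -> Prop) -> Prop) :
  is_topology opn -> top_hausdorff opn -> hL_le opn C ->
  forall l : list T, card_le {z | In z l} C.
Proof.
  intros Htop Hh hL l.
  set (O := fun x => proj1_sig (cid (separate_from_list T opn Htop Hh l x))).
  assert (HO : forall x, opn (O x) /\ O x x /\ forall y, In y l -> y <> x -> ~ O x y).
  { intros x; exact (proj2_sig (cid (separate_from_list T opn Htop Hh l x))). }
  destruct (hL (fun z => In z l) (fun A => exists x, In x l /\ A = O x))
    as [V [VU [Vcov [gV HgV]]]].
  { intros A [x [_ ->]]; apply HO. }
  { intros z Hz; exists (O z); split; [eauto| apply HO]. }
  assert (HA : forall z : {z | In z l}, exists A : {A | V A}, proj1_sig A (proj1_sig z)).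
  { intros [z Hz]; destruct (Vcov z Hz) as [A [VA Az]]; exists (exist _ A VA); exact Az. }
  exists (fun z => gV (proj1_sig (cid (HA z)))).
  intros z1 z2 E; apply HgV in E.
  pose proof (proj2_sig (cid (HA z1))) as H1; pose proof (proj2_sig (cid (HA z2))) as H2.
  cbv beta in H1, H2; rewrite E in H1.
  destruct (VU _ (proj2_sig (proj1_sig (cid (HA z2))))) as [x [_ EA]].
  rewrite EA in H1, H2; apply sig_ext.
  (* both points lie in [O x], whose only point of [l] is [x] *)
  assert (Hx : forall z : {z | In z l}, O x (proj1_sig z) -> proj1_sig z = x).
  { intros [z Hz] Oz; apply NNPP; intros Ne; exact (proj2 (proj2 (HO x)) z Hz Ne Oz). }
  rewrite (Hx z1 H1), (Hx z2 H2); reflexivity.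
Qed.

Lemma nodup_card_le_length {A B : Type} (l : list A) (lb : list B) :
  NoDup l -> card_le {z | In z l} B -> (forall b, In b lb) -> length l <= length lb.
Proof.
  intros Hl [g Hg] Hlb. destruct l as [|z0 l']; [simpl; lia|].
  set (G := fun z : A => match emi (In z (z0 :: l')) with
              | left H => g (exist _ z H) | right _ => g (exist _ z0 (in_eq z0 l')) end).
  assert (HG : NoDup (map G (z0 :: l'))).
  { apply NoDup_map_NoDup_ForallPairs; auto.
    intros a b Ha Hb; unfold G.
    destruct (emi (In a (z0 :: l'))) as [h1|h1]; [|contradiction].
    destruct (emi (In b (z0 :: l'))) as [h2|h2]; [|contradiction].
    intros E; exact (f_equal (@proj1_sig _ _) (Hg _ _ E)). }
  pose proof (NoDup_incl_length HG (fun c _ => Hlb c)) as Hlen.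
  rewrite length_map in Hlen; exact Hlen.
Qed.

Lemma nodup_lists (T : Type) : @infinite_type T ->
  forall n, exists l : list T, NoDup l /\ length l = n.
Proof.
  intros Hinf n; induction n as [|n [l [Hl Hln]]].
  - exists nil; split; [constructor| reflexivity].
  - assert (Hx : exists x, ~ In x l).
    { apply NNPP; intros N; apply Hinf; exists l; intros x; apply NNPP; intros Hx; eauto. }
    destruct Hx as [x Hx]; exists (x :: l); split; [constructor; auto| simpl; congruence].
Qed.

Lemma hL_le_infinite (T C : Type) (opn : (T -> Prop) -> Prop) :
  is_topology opn -> top_hausdorff opn -> @infinite_type T -> hL_le opn C ->
  card_le nat C.
Proof.
  intros Htop Hh Hinf hL.
  destruct (infinite_or_finite (fun _ : C => True)) as [Cinf|[lc Hlc]].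
  - exact (card_le_trans _ _ _ Cinf (card_full_le C)).
  - exfalso. destruct (nodup_lists T Hinf (S (length lc))) as [l [Hl Hlen]].
    pose proof (nodup_card_le_length l lc Hl (hL_le_list T C opn Htop Hh hL l)
                  (fun c => Hlc c I)) as H.
    lia.
Qed.

(* The cozero set of a continuous function is open: it is the union of the
   open sets [{0 < f < b}] and [{c < f < 0}]. *)
Lemma cozero_open (T : Type) (opn : (T -> Prop) -> Prop) (f : T -> R) :
  is_topology opn -> continuous_on opn f -> opn (fun z => f z <> 0%R).
Proof.
  intros [_ [_ [_ Hunion]]] Hf.
  set (F := fun A : T -> Prop => exists b c : R, A = (fun y => b < f y < c)%R /\ (c <= 0 \/ 0 <= b)%R).
  replace (fun z => f z <> 0%R) with (fun z => exists A, F A /\ A z).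
  - apply Hunion; intros A [b [c [-> _]]]; apply Hf.
  - apply functional_extensionality; intros z; apply propositional_extensionality; split.
    + intros [A [[b [c [-> Hbc]]] Az]]; simpl in Az; lra.
    + intros Hz; destruct (Rlt_or_le 0 (f z)).
      * exists (fun y => 0 < f y < f z + 1)%R; split; [exists 0%R, (f z + 1)%R; split; auto; right; lra| simpl; lra].
      * exists (fun y => f z - 1 < f y < 0)%R; split; [exists (f z - 1)%R, 0%R; split; auto; left; lra| simpl; lra].
Qed.

Lemma one_supported_kernel (T : Type) (opn : (T -> Prop) -> Prop)
  (phi : (T -> R) -> R) (g0 : T -> R) :
  one_supported opn phi -> continuous_on opn g0 -> phi g0 <> 0%R ->
  exists x : T, forall g, continuous_on opn g -> (phi g = 0%R <-> g x = 0%R).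
Proof.
  intros [a [x Hax]] Hg0 Hne; exists x; intros g Hg.
  rewrite (Hax g Hg). rewrite (Hax g0 Hg0) in Hne.
  assert (Ha : a <> 0%R) by (intros E; apply Hne; rewrite E; ring).
  split; [intros E; destruct (Rmult_integral _ _ E); tauto| intros ->; ring].
Qed.

(* hL(K) <= |C| implies sbiort_1(C(K)) <= |C|: the support points of a
   semibiorthogonal sequence of functionals [a_i * delta_{x_i}] form a
   right-separated family for the cozero sets of the [f_i]. *)
Lemma hL_le_sbiort1_le (T C : Type) (opn : (T -> Prop) -> Prop) :
  is_topology opn -> top_hausdorff opn -> @infinite_type T ->
  hL_le opn C -> sbiort1_le opn C.
Proof.
  intros Htop Hh Hinf hL I lt f phi wo cont _ one [diag [below _]].
  assert (Hx : forall i, exists x : T,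
             forall g, continuous_on opn g -> (phi i g = 0%R <-> g x = 0%R)).
  { intros i; apply (one_supported_kernel T opn _ (f i)); auto.
    rewrite diag; exact R1_neq_R0. }
  set (x := fun i => proj1_sig (cid (Hx i))).
  assert (Hxspec : forall i g, continuous_on opn g -> (phi i g = 0%R <-> g (x i) = 0%R)).
  { intros i; exact (proj2_sig (cid (Hx i))). }
  apply (right_separated_card_le T I C opn lt x (fun i z => f i z <> 0%R)); auto.
  - intros i; exact (cozero_open T opn (f i) Htop (cont i)).
  - intros i E; apply (Hxspec i (f i) (cont i)) in E. rewrite diag in E; exact (R1_neq_R0 E).
  - intros i j Hij N; apply N, (Hxspec j (f i) (cont i)), below, Hij.
  - exact (hL_le_infinite T C opn Htop Hh Hinf hL).
Qed.

(* Greedy transfinite selection along a well-founded order: keep a point of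
   [Y] unless it is "hit" ([N y x]) by an earlier kept point [y]. *)
Lemma greedy_selection (T : Type) (lt : T -> T -> Prop) (Y : T -> Prop)
  (N : T -> T -> Prop) : well_founded lt ->
  exists sel : T -> Prop,
    (forall x, sel x -> Y x) /\
    (forall x y, sel x -> sel y -> lt y x -> ~ N y x) /\
    (forall y, Y y -> ~ sel y -> exists z, sel z /\ N z y).
Proof.
  intros wf.
  set (sel := Fix wf (fun _ => Prop) (fun x rec =>
                Y x /\ forall y (H : lt y x), rec y H -> ~ N y x)).
  assert (sel_eq : forall x, sel x = (Y x /\ forall y, lt y x -> sel y -> ~ N y x)).
  { intros x; unfold sel; rewrite Fix_eq; [reflexivity|].
    intros z g1 g2 Hg; apply propositional_extensionality; split;
      intros [Yz Hz]; (split; [exact Yz|]); intros q H Hq; apply (Hz q H).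
    - rewrite Hg; exact Hq.
    - rewrite <- Hg; exact Hq. }
  exists sel; split; [|split].
  - intros x Sx; rewrite sel_eq in Sx; apply Sx.
  - intros x y Sx Sy Hyx; rewrite sel_eq in Sx; exact (proj2 Sx y Hyx Sy).
  - intros y Yy Ny; rewrite sel_eq in Ny.
    apply NNPP; intros Nz; apply Ny; split; auto.
    intros z _ Sz Hz; apply Nz; eauto.
Qed.

Lemma well_order_restrict (T : Type) (lt : T -> T -> Prop) (P : T -> Prop) :
  well_order lt -> well_order (fun i j : {x | P x} => lt (proj1_sig i) (proj1_sig j)).
Proof.
  intros [irr [trs [tot wf]]]; split; [|split; [|split]].
  - intros i; apply irr.
  - intros i j k; apply trs.
  - intros i j; destruct (tot (proj1_sig i) (proj1_sig j)) as [h|[h|h]]; auto.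
    right; left; exact (sig_ext _ _ h).
  - exact (wf_inverse_image _ _ lt (@proj1_sig _ _) wf).
Qed.

Lemma eval_in_dual (T : Type) (opn : (T -> Prop) -> Prop) (x : T) :
  in_dual opn (fun g => g x).
Proof.
  split; [intros; reflexivity|].
  exists 1%R; intros g c _ Hc; rewrite Rmult_1_l; apply Hc.
Qed.

Lemma eval_one_supported (T : Type) (opn : (T -> Prop) -> Prop) (x : T) :
  one_supported opn (fun g => g x).
Proof. exists 1%R, x; intros g _; ring. Qed.

Definition urysohn_points {T : Type} (opn : (T -> Prop) -> Prop) : Prop :=
  forall (x : T) (O : T -> Prop), opn O -> O x ->
    exists g : T -> R, continuous_on opn g /\ g x = 1%R /\
      (forall z, ~ O z -> g z = 0%R) /\ (forall z, (0 <= g z)%R).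

(* Given an open cover of [Y],
   select greedily (along a well-order of K) points of [Y] not covered by the
   chosen neighbourhoods of earlier selected points.  Urysohn functions of the
   selected points with the point evaluations form a semibiorthogonal
   sequence, so at most |C| points are selected, and their neighbourhoods are
   a subcover. *)
Lemma sbiort1_le_hL_le (T C : Type) (opn : (T -> Prop) -> Prop) :
  urysohn_points opn -> sbiort1_le opn C -> hL_le opn C.
Proof.
  intros Ury Hs Y U Uo Ucov.
  destruct (WellOrdering.well_order_exists T) as [ltT woT].
  assert (Hnb : forall z, exists A, Y z -> U A /\ A z).
  { intros z; destruct (classic (Y z)) as [Yz|]; [|exists (fun _ => True); tauto].
    destruct (Ucov z Yz) as [A HA]; exists A; auto. }
  set (nb := fun z => proj1_sig (cid (Hnb z))).
  assert (Hnbz : forall z, Y z -> U (nb z) /\ nb z z) by (intros z; exact (proj2_sig (cid (Hnb z)))).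
  destruct (greedy_selection T ltT Y nb (proj2 (proj2 (proj2 woT))))
    as [sel [selY [sel_sep sel_cov]]].
  set (I := {x | sel x}).
  set (lt := fun i j : I => ltT (proj1_sig i) (proj1_sig j)).
  assert (Hg : forall i : I, exists g : T -> R, continuous_on opn g /\ g (proj1_sig i) = 1%R /\
      (forall z, ~ nb (proj1_sig i) z -> g z = 0%R) /\ (forall z, (0 <= g z)%R)).
  { intros [x Sx]; destruct (Hnbz x (selY x Sx)) as [HU Hx]; exact (Ury _ _ (Uo _ HU) Hx). }
  set (f := fun i => proj1_sig (cid (Hg i))).
  assert (Hf : forall i : I, continuous_on opn (f i) /\ f i (proj1_sig i) = 1%R /\
      (forall z, ~ nb (proj1_sig i) z -> f i z = 0%R) /\ (forall z, (0 <= f i z)%R)).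
  { intros i; exact (proj2_sig (cid (Hg i))). }
  assert (HIC : card_le I C).
  { apply (Hs I lt f (fun i g => g (proj1_sig i))).
    - exact (well_order_restrict T ltT sel woT).
    - intros i; apply Hf.
    - intros i; apply eval_in_dual.
    - intros i; apply eval_one_supported.
    - split; [|split].
      + intros i; apply Hf.
      + intros i j Hji; apply Hf, sel_sep; [exact (proj2_sig i)| exact (proj2_sig j)| exact Hji].
      + intros i j _; apply Hf. }
  exists (fun A => exists i : I, A = nb (proj1_sig i)); split; [|split].
  - intros A [[x Sx] ->]; exact (proj1 (Hnbz x (selY x Sx))).
  - intros y Yy; destruct (classic (sel y)) as [Sy|Ny].
    + exists (nb y); split; [exists (exist _ y Sy); reflexivity| apply Hnbz, Yy].
    + destruct (sel_cov y Yy Ny) as [z [Sz Hz]].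
      exists (nb z); split; [exists (exist _ z Sz); reflexivity| exact Hz].
  - exact (card_le_trans _ _ _ (card_le_range I _ (fun i => nb (proj1_sig i))) HIC).
Qed.

Lemma sbiort_le_sbiort1_le (T C : Type) (opn : (T -> Prop) -> Prop) :
  sbiort_le opn C -> sbiort1_le opn C.
Proof.
  intros Hs I lt f phi wo cont dual _ sbo; exact (Hs I lt f phi wo cont dual sbo).
Qed.

(* Urysohn's lemma for compact Hausdorff spaces, obtained from
   MathComp-Analysis: the topology [opn] is installed as a topological space
   structure on a copy of [T], which is then compact, Hausdorff, hence normal,
   and point-closed sets are separated from closed sets by continuous maps. *)
Module CompactUrysohn.
From HB Require Import structures.
From mathcomp Require Import all_boot all_order all_algebra.
From mathcomp Require Import all_classical all_reals all_analysis.
From mathcomp Require Import Rstruct Rstruct_topology finmap.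
Import Order.TTheory GRing.Theory Num.Theory.
Local Open Scope classical_set_scope.

Section Space.
Variable (T : Type) (opn : (T -> Prop) -> Prop).
Hypothesis Htop : is_topology opn.
Hypothesis Hcpt : top_compact opn.
Hypothesis Hhd : top_hausdorff opn.
Variable t0 : T.

Definition space : Type := T.
HB.instance Definition _ := gen_eqMixin space.
HB.instance Definition _ := gen_choiceMixin space.
HB.instance Definition _ := isPointed.Build space t0.

Let opT : opn (@setT space).
Proof. by case: Htop. Qed.
Let opI : setI_closed (opn : set_system space).
Proof. move=> A B; case: Htop => _ [_ [H _]]; exact: H. Qed.
Let opU : forall (I : Type) (f : I -> set space), (forall i, opn (f i)) ->
    opn (\bigcup_i f i).
Proof.
move=> I f Hf; case: Htop => _ [_ [_ H]].
have := H (fun A => exists i, A = f i).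
have -> : (fun x => exists A, (exists i, A = f i) /\ A x) = \bigcup_i f i.
  apply/funext => x; apply/propext; split.
    by case=> A [[i ->] fx]; exists i.
  by case=> i _ fx; exists (f i); split => //; exists i.
apply; by move=> A [i ->].
Qed.

HB.instance Definition _ := isOpenTopological.Build space opT opI opU.

Lemma open_opn (A : set space) : open A <-> opn A.
Proof.
split.
  rewrite openE => oA.
  have -> : A = \bigcup_(B : {B : set space & opn B /\ B `<=` A}) projT1 B.
    rewrite predeqE => p; split=> [|[B _ Bp]]; last by have [_] := projT2 B; apply.
    by move=> /oA; rewrite /interior => -[B [Bop Bp sBA]]; exists (existT _ B (conj Bop sBA)).
  by apply: opU => B; have [] := projT2 B.
move=> oA; rewrite openE => p Ap; exists A; split => //.
Qed.

Lemma space_hausdorff : hausdorff_space space.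
Proof.
rewrite open_hausdorff => x y /eqP xy.
have [A [B [oA [oB [Ax [By AB]]]]]] := Hhd _ _ xy.
exists (A, B) => /=; first by split; apply: mem_set.
split; [exact/open_opn|exact/open_opn|].
apply/eqP; rewrite predeqE => z; split => // [[]]; exact: AB.
Qed.

Lemma space_compact : compact [set: space].
Proof.
rewrite (@compact_cover space) => I D f fo cov.
have H1 : forall A, (fun A => exists i, D i /\ A = f i) A -> opn A.
  by move=> A [i [Di ->]]; apply/open_opn; apply: fo.
have H2 : forall x, exists A, (fun A => exists i, D i /\ A = f i) A /\ A x.
  move=> x; have [i Di fx] := cov x Logic.I; exists (f i); split => //; by exists i.
have [l [Fl covl]] := Hcpt _ H1 H2.
suff [D' [sD' cD']] : exists D' : {fset I}, {subset D' <= D} /\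
   (forall x, (exists A, In A l /\ A x) -> cover [set` D'] f x).
  by exists D' => // x _; apply: cD'.
elim: l Fl {covl} => [|A l IH] Fl.
  by exists fset0; split => // x [A []].
have /Forall_cons_iff [[i [Di ->]] Fl'] := Fl.
have [D' [sD' cD']] := IH Fl'.
exists (i |` D')%fset; split.
  move=> j; rewrite !inE => /orP [/eqP ->|jD]; [exact: mem_set | exact: sD'].
move=> x [B [[<-|Bl] Bx]].
  by exists i => //=; rewrite !inE eqxx.
have [j jD' fjx] := cD' x (ex_intro _ B (conj Bl Bx)).
by exists j => //=; rewrite !inE jD' orbT.
Qed.

Lemma space_urysohn (x : space) (O : set space) : opn O -> O x ->
  exists g : space -> R, continuous_on opn g /\ g x = R1 /\
    (forall z, ~ O z -> g z = R0) /\ (forall z, Rle R0 (g z)).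
Proof.
move=> oO Ox.
have nT : normal_space space by apply: compact_normal; [exact: space_hausdorff|exact: space_compact].
have cA : closed (~` O) by apply: open_closedC; apply/open_opn.
have cB : closed [set x] := @accessible_closed_set1 _ (hausdorff_accessible space_hausdorff) x.
have AB : ~` O `&` [set x] = set0.
  rewrite predeqE => z; split => // -[nOz zx]; apply: nOz; by rewrite zx.
have := @normal_uniform_separator space nT _ _ cA cB AB.
move/(@uniform_separatorP space R) => [g [cg rg g0 g1]].
exists g; split; last split; last split.
- move=> a b; apply/open_opn.
  have -> : (fun z => Rlt a (g z) /\ Rlt (g z) b) = g @^-1` `]a, b[.
    apply/funext => z; apply/propext; rewrite /= in_itv /=; split.
      by case=> /RltP -> /RltP ->.
    by move=> /andP [/RltP ? /RltP ?].
  apply: (proj1 (continuousP g)) => //; exact: (@interval_open R (BSide false a) (BSide true b)).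
- by apply: g1; exists x.
- by move=> z nOz; apply: g0; exists z.
- move=> z; have := rg _ (ex_intro2 _ _ z Logic.I erefl); rewrite /= in_itv /= => /andP [/RleP ? _] //.
Qed.

End Space.

Lemma compact_hausdorff_urysohn (T : Type) (opn : (T -> Prop) -> Prop) :
  is_topology opn -> top_compact opn -> top_hausdorff opn -> urysohn_points opn.
Proof. move=> Htop Hcpt Hhd x O; exact: (@space_urysohn T opn Htop Hcpt Hhd x x O). Qed.

End CompactUrysohn.

Theorem mainTheorem16 (T : Type) (opn : (T -> Prop) -> Prop) :
  is_topology opn -> top_compact opn -> top_hausdorff opn -> @infinite_type T ->
  (forall C : Type, sbiort1_le opn C <-> hL_le opn C) /\
  (forall C : Type, sbiort_le opn C -> hL_le opn C).
Proof.
  intros Htop Hcpt Hhd Hinf.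
  pose proof (CompactUrysohn.compact_hausdorff_urysohn T opn Htop Hcpt Hhd) as Ury.
  assert (Hequiv : forall C : Type, sbiort1_le opn C <-> hL_le opn C).
  { intros C; split.
    - exact (sbiort1_le_hL_le T C opn Ury).
    - exact (hL_le_sbiort1_le T C opn Htop Hhd Hinf). }
  split; [exact Hequiv|].
  intros C Hs; apply Hequiv, sbiort_le_sbiort1_le, Hs.
Qed.
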